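(* Let $\Gamma$ be a group with $\operatorname{H}^1_b(\Gamma;\mathbb{R}) \cong 0$ and $\operatorname{H}^2_b(\Gamma;\mathbb{R}) \cong 0$. Then the second vanishing modulus of $\Gamma$ equals $1$.
   Context: $\operatorname{C}^n_b(\Gamma;\mathbb{R}) = \ell^\infty(\Gamma^{n+1})^\Gamma$ (bounded real functions invariant under the diagonal action) with supremum norm $|\cdot|_\infty$ and homogeneous coboundary $\delta^n_b$; $\operatorname{H}^*_b(\Gamma;\mathbb{R})$ is its cohomology. If $\operatorname{H}^n_b(\Gamma;\mathbb{R})\cong 0$, the $n$-th vanishing modulus of $\Gamma$ is the minimal $K \in \mathbb{R}_{\geq 0}\cup\{\infty\}$ such that for every $c \in \ker \delta^n_b$ there is $b \in \operatorname{C}^{n-1}_b(\Gamma;\mathbb{R})$ with $\delta^{n-1}_b(b) = c$ and $|b|_\infty \leq K|c|_\infty$. *)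

From HB Require Import structures.
From mathcomp Require Import all_boot all_order all_algebra.
From mathcomp Require Import all_classical all_reals.
From mathcomp Require Import Rstruct.
Set Implicit Arguments. Unset Strict Implicit. Unset Printing Implicit Defensive.
Import Order.TTheory GRing.Theory Num.Theory.
Local Open Scope ring_scope.
Local Open Scope classical_set_scope.

Record group := Group {
  gcarrier :> Type;
  gmul : gcarrier -> gcarrier -> gcarrier;
  gone : gcarrier;
  ginv : gcarrier -> gcarrier;
  gmulA : forall x y z, gmul x (gmul y z) = gmul (gmul x y) z;
  gmul1 : forall x, gmul gone x = x;
  gmulV : forall x, gmul (ginv x) x = gone }.

Notation RR := Rdefinitions.R.

(* Homogeneous n-cochains: real functions on Gamma^(n+1). *)
Definition cochain (G : group) (n : nat) := ('I_n.+1 -> G) -> RR.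

Definition bounded_cochain (G : group) n (f : cochain G n) : Prop :=
  exists M : RR, forall x, `|f x| <= M.

Definition invariant_cochain (G : group) n (f : cochain G n) : Prop :=
  forall (g : G) (x : 'I_n.+1 -> G), f (fun j => gmul g (x j)) = f x.

Definition Cb (G : group) n (f : cochain G n) : Prop :=
  bounded_cochain f /\ invariant_cochain f.

Definition coboundary (G : group) n (f : cochain G n) : cochain G n.+1 :=
  fun x => \sum_(i < n.+2) (-1) ^+ i * f (fun j => x (lift i j)).

Definition supnorm (G : group) n (f : cochain G n) : RR :=
  sup [set `|f x| | x in [set: 'I_n.+1 -> G]].

(* H^(n+1)_b(Gamma; R) = 0 : every bounded (n+1)-cocycle is the coboundary
   of a bounded invariant n-cochain. *)
Definition Hb_vanishes (G : group) (n : nat) : Prop :=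
  forall c : cochain G n.+1, Cb c -> coboundary c = (fun _ => 0) ->
    exists b : cochain G n, Cb b /\ coboundary b = c.

(* K (in [0, +oo]) is an admissible constant in degree n+1. *)
Definition vanishing_constant (G : group) (n : nat) (K : \bar RR) : Prop :=
  (0 <= K)%E /\
  forall c : cochain G n.+1, Cb c -> coboundary c = (fun _ => 0) ->
    exists b : cochain G n, Cb b /\ coboundary b = c /\
      ((supnorm b)%:E <= K * (supnorm c)%:E)%E.

(* The (n+1)-th vanishing modulus equals K: K is the minimal admissible
   constant. *)
Definition vanishing_modulus_is (G : group) (n : nat) (K : \bar RR) : Prop :=
  vanishing_constant G n K /\
  forall K', vanishing_constant G n K' -> (K <= K')%E.

From mathcomp Require Import all_boot all_order all_algebra.
From mathcomp Require Import all_classical all_reals.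
From mathcomp Require Import Rstruct.
From mathcomp Require Import lra.
Set Implicit Arguments. Unset Strict Implicit. Unset Printing Implicit Defensive.
Import Order.TTheory GRing.Theory Num.Theory.
Local Open Scope ring_scope.
Local Open Scope classical_set_scope.

(* Upper bound: let b be a bounded invariant 1-cochain and g, x in Gamma.
   By invariance b(g^k x, g^(k+1) x) = b(x, gx), so summing db along the orbit
   x, gx, g^2 x, ... shows that b(x, g^n x) - b(x, x) differs from n b(x, gx)
   by at most n |db|_oo; as b is bounded, |b(x, gx)| <= |db|_oo.  Hence every
   bounded primitive of a 2-cocycle c has norm at most |c|_oo.
   Lower bound: in even degree the constant cochain 1 is a cocycle, and any
   primitive b of it satisfies b(1, ..., 1) = db(1, ..., 1) = 1. *)

Section GroupFacts.
Variable G : group.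

Lemma gmulVr (x : G) : gmul x (ginv x) = gone G.
Proof.
rewrite -{1}(gmul1 (gmul x (ginv x))) -{1}(gmulV (ginv x)).
by rewrite -gmulA (gmulA (ginv x)) gmulV gmul1 gmulV.
Qed.

Lemma gmulr1 (x : G) : gmul x (gone G) = x.
Proof. by rewrite -(gmulV x) gmulA gmulVr gmul1. Qed.

End GroupFacts.

Lemma natmul_bounded_le0 (R : archiRealFieldType) (e M : R) :
  (forall n : nat, n%:R * e <= M) -> e <= 0.
Proof.
move=> h; rewrite leNgt; apply/negP => e_gt0.
have M_ge0 : 0 <= M by have := h 0%N; rewrite mul0r.
have := archi_boundP (divr_ge0 M_ge0 (ltW e_gt0)).
by rewrite ltr_pdivrMr // ltNge h.
Qed.

Section SupNorm.
Variables (G : group) (n : nat).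

Lemma normr_le_supnorm (f : cochain G n) x :
  bounded_cochain f -> `|f x| <= supnorm f.
Proof. by move=> [M hM]; apply: ub_le_sup; [exists M => _ [y _ <-] | exists x]. Qed.

Lemma supnorm_le (f : cochain G n) C : (forall x, `|f x| <= C) -> supnorm f <= C.
Proof.
move=> h; apply: ge_sup; last by move=> _ [y _ <-].
by exists `|f (fun _ => gone G)|, (fun _ => gone G).
Qed.

Lemma supnorm_cst (r : RR) : supnorm (fun _ : 'I_n.+1 -> G => r) = `|r|.
Proof.
apply/le_anti/andP; split; first exact: supnorm_le.
by apply: (@normr_le_supnorm _ (fun _ => gone G)); exists `|r|.
Qed.

End SupNorm.

Lemma sum_alternating_cst (R : pzRingType) (n : nat) (r : R) :
  \sum_(i < n.+2) (-1) ^+ i * r = if odd n then r else 0.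
Proof.
elim: n => [|n IH].
  by rewrite !big_ord_recl big_ord0 /= expr0 expr1 addr0 mul1r mulN1r subrr.
rewrite big_ord_recl expr0 mul1r.
under eq_bigr => i _ do rewrite /bump /= exprS mulN1r mulNr.
by rewrite sumrN IH /=; case: (odd n); rewrite ?subrr ?subr0.
Qed.

Section Coboundary.
Variables (G : group) (n : nat).

Lemma coboundary_cst (r : RR) :
  coboundary (fun _ : 'I_n.+1 -> G => r) = fun _ => if odd n then r else 0.
Proof. by apply: funext => x; rewrite /coboundary sum_alternating_cst. Qed.

Lemma coboundary_diag (f : cochain G n) (g : G) :
  coboundary f (fun _ => g) = if odd n then f (fun _ => g) else 0.
Proof. exact: sum_alternating_cst. Qed.

End Coboundary.

Section Degree1.
Variable G : group.

Definition tup2 (u v : G) : 'I_2 -> G := fun j => if val j == 0%N then u else v.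
Definition tup3 (u v w : G) : 'I_3 -> G :=
  fun j => if val j == 0%N then u else if val j == 1%N then v else w.

Lemma tup2E (x : 'I_2 -> G) : x = tup2 (x ord0) (x ord_max).
Proof.
by apply: funext => -[[|[|//]] j_lt] /=; rewrite /tup2 /=; congr x; apply: val_inj.
Qed.

Lemma coboundary1_tup3 (b : cochain G 1) u v w :
  coboundary b (tup3 u v w) = b (tup2 v w) - b (tup2 u w) + b (tup2 u v).
Proof.
rewrite /coboundary !big_ord_recl big_ord0 /= addr0.
rewrite expr0 expr1 expr2 !mulN1r opprK !mul1r.
by rewrite addrA; congr (b _ - b _ + b _); apply: funext => -[[|[|//]] j_lt].
Qed.

Variables (b : cochain G 1) (C : RR).
Hypothesis b_inv : invariant_cochain b.
Hypothesis db_le : forall y, `|coboundary b y| <= C.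

Lemma invariant_cochain1_orbit (g x : G) k :
  b (tup2 (iter k (gmul g) x) (iter k.+1 (gmul g) x)) = b (tup2 x (gmul g x)).
Proof.
elim: k => [//|k IH]; rewrite -{}IH -[RHS](b_inv g).
by congr b; apply: funext => j; rewrite /tup2; case: ifP.
Qed.

Lemma cochain1_orbit_drift (g x : G) (k : nat) :
  `|b (tup2 x (iter k (gmul g) x)) - b (tup2 x x) - k%:R * b (tup2 x (gmul g x))|
    <= k%:R * C.
Proof.
elim: k => [|k IH]; first by rewrite mul0r subr0 subrr normr0 mul0r.
set y := iter k (gmul g) x.
have step := coboundary1_tup3 b x y (gmul g y).
rewrite -/(iter k.+1 _ _) invariant_cochain1_orbit in step.
have -> : b (tup2 x (iter k.+1 (gmul g) x)) - b (tup2 x x)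
            - k.+1%:R * b (tup2 x (gmul g x))
          = b (tup2 x y) - b (tup2 x x) - k%:R * b (tup2 x (gmul g x))
            - coboundary b (tup3 x y (gmul g y)).
  by rewrite step -natr1 /=; lra.
by rewrite -natr1 mulrDl mul1r; apply: le_trans (ler_normB _ _) (lerD IH (db_le _)).
Qed.

Lemma invariant_cochain1_norm_le : bounded_cochain b -> forall x, `|b x| <= C.
Proof.
move=> [M b_le] x; rewrite (tup2E x); set x0 := x ord0; set x1 := x ord_max.
pose g := gmul x1 (ginv x0).
have -> : x1 = gmul g x0 by rewrite /g -gmulA gmulV gmulr1.
rewrite -subr_le0; apply: (@natmul_bounded_le0 _ _ (M + M)) => k.
set a := b (tup2 x0 (gmul g x0)); set y := iter k (gmul g) x0.
have drift := cochain1_orbit_drift g x0 k; rewrite -/a -/y in drift.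
have u_le : `|b (tup2 x0 y) - b (tup2 x0 x0)| <= M + M.
  exact: le_trans (ler_normB _ _) (lerD (b_le _) (b_le _)).
have := lerB_normD (- (k%:R * a)) (b (tup2 x0 y) - b (tup2 x0 x0)).
rewrite (addrC (- _)) normrN normrM normr_nat => /(le_trans)/(_ drift).
rewrite lerBlDr mulrBr lerBlDr => ka_le; apply: le_trans ka_le _.
by rewrite addrC lerD2r.
Qed.

End Degree1.

Lemma vanishing_constant1_one (G : group) :
  Hb_vanishes G 1 -> vanishing_constant G 1 1%:E.
Proof.
move=> Hb2; split=> [|c c_Cb dc0]; first by rewrite lee_fin.
have [b [[b_bd b_inv] db_c]] := Hb2 c c_Cb dc0.
exists b; split=> //; split=> //; rewrite mul1e lee_fin; apply: supnorm_le.
apply: invariant_cochain1_norm_le => // y; rewrite db_c.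
exact: normr_le_supnorm (proj1 c_Cb).
Qed.

Lemma vanishing_constant_odd_ge1 (G : group) (n : nat) (K : \bar RR) :
  odd n -> vanishing_constant G n K -> (1%:E <= K)%E.
Proof.
move=> n_odd [_ hK].
pose c : cochain G n.+1 := fun _ => 1.
have c_Cb : Cb c by split=> //; exists 1 => x; rewrite normr1.
have dc0 : coboundary c = fun _ => 0 by rewrite coboundary_cst /= n_odd.
have [b [[b_bd _] [db_c b_le]]] := hK c c_Cb dc0.
rewrite supnorm_cst normr1 mule1 in b_le; apply: le_trans b_le; rewrite lee_fin.
have <- : b (fun _ => gone G) = 1.
  by have := congr1 (fun f => f (fun _ => gone G)) db_c; rewrite coboundary_diag n_odd.
exact: le_trans (ler_norm _) (normr_le_supnorm _ b_bd).
Qed.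

Theorem proposition4p15 (G : group) :
  Hb_vanishes G 0 -> Hb_vanishes G 1 -> vanishing_modulus_is G 1 (1%R : RR)%:E.
Proof.
move=> _ Hb2; split; first exact: vanishing_constant1_one.
by move=> K; apply: vanishing_constant_odd_ge1.
Qed.
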